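(* For all finite simple graphs $G$ and $H$, $\alpha_{\mathcal S}(G\boxtimes H)\le\alpha_{\mathcal S}(G)\,\alpha_{\mathcal S}(H)$.
   Context: The strong product $G\boxtimes H$ has vertex set $V(G)\times V(H)$, with $(i,j)\sim(i',j')$ iff ($i\sim_G i'$ and $j\sim_H j'$) or ($i\sim_G i'$ and $j=j'$) or ($i=i'$ and $j\sim_H j'$). For a graph on $n$ vertices, a weighted adjacency matrix is a real symmetric $A$ with $A_{ii}=0$ and $A_{ij}=0$ for non-adjacent $i\ne j$; $\mathcal S_n=\{\boldsymbol v\in\mathbb R^n:\langle\boldsymbol 1,\boldsymbol v\rangle=|\boldsymbol v|^2\}$ with $\boldsymbol 1$ the all-ones vector; and the spherical independence number is $\alpha_{\mathcal S}(G)=\inf_A\sup\{|\boldsymbol v|^2:\boldsymbol v\in\mathcal S_n,\ \langle\boldsymbol v,A\boldsymbol v\rangle=0\}$ over weighted adjacency matrices $A$ of $G$. *)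

From mathcomp Require Import all_boot all_order all_algebra.
From mathcomp Require Import boolp classical_sets reals.
Set Implicit Arguments. Unset Strict Implicit. Unset Printing Implicit Defensive.
Import Order.TTheory GRing.Theory Num.Theory.
Local Open Scope ring_scope.
Local Open Scope classical_set_scope.

Definition simple_graph (T : finType) (e : rel T) : Prop :=
  symmetric e /\ irreflexive e.

Definition strong_prod (T1 T2 : finType) (e1 : rel T1) (e2 : rel T2) : rel (T1 * T2) :=
  fun x y => [|| e1 x.1 y.1 && e2 x.2 y.2,
                 e1 x.1 y.1 && (x.2 == y.2)
               | (x.1 == y.1) && e2 x.2 y.2].

Definition weighted_adj (R : realType) (T : finType) (e : rel T) (A : T -> T -> R) : Prop :=
  [/\ forall i j, A i j = A j i,
      forall i, A i i = 0
    & forall i j, i != j -> ~~ e i j -> A i j = 0].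

Definition sqnorm (R : realType) (T : finType) (v : T -> R) : R := \sum_i v i ^+ 2.
Definition qform (R : realType) (T : finType) (A : T -> T -> R) (v : T -> R) : R :=
  \sum_i \sum_j v i * A i j * v j.

Definition in_S (R : realType) (T : finType) (v : T -> R) : Prop :=
  \sum_i v i = sqnorm v.

Definition sup_val (R : realType) (T : finType) (A : T -> T -> R) : R :=
  sup [set sqnorm v | v in [set v : T -> R | in_S v /\ qform A v = 0]].

Definition alphaS (R : realType) (T : finType) (e : rel T) : R :=
  inf [set sup_val A | A in [set A : T -> T -> R | weighted_adj e A]].

From mathcomp Require Import all_boot all_order all_algebra.
From mathcomp Require Import boolp classical_sets reals.
From mathcomp Require Import ring lra.
Import Order.TTheory GRing.Theory Num.Theory.
Local Open Scope ring_scope.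
Set Implicit Arguments. Unset Strict Implicit. Unset Printing Implicit Defensive.

(* For a weighted adjacency matrix A with a = sup_val A, every x with <x, A x> = 0
   satisfies (sum x)^2 <= a |x|^2.  A nonzero A is indefinite, so the S-lemma turns
   this into a certificate: G = a I - J + l A is positive semidefinite for some l,
   J being the all-ones matrix.  Given certificates G1, G2 for A1, A2, the matrix
   C = (a I + l1 A1) (x) (b I + l2 A2) - a b I is a weighted adjacency matrix of the
   strong product, and C + a b I - J = G1 (x) G2 + G1 (x) J + J (x) G2 is positive
   semidefinite because Kronecker products of psd matrices are psd.  Hence every v
   in S with <v, C v> = 0 has |v|^4 = (sum v)^2 <= a b |v|^2, i.e. sup_val C <= a b,
   and it remains to take infima over A1 and A2. *)

Section QuadraticForms.
Variables (R : realType) (T : finType).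
Implicit Types (G M N A : T -> T -> R) (x y : T -> R).

Lemma sum_mul_delta (F : T -> R) p : \sum_j F j * (j == p)%:R = F p.
Proof.
by rewrite (bigD1 p) //= eqxx mulr1 big1 ?addr0 // => j /negbTE ->; rewrite mulr0.
Qed.

Lemma sqr_sum x : (\sum_i x i) ^+ 2 = \sum_i \sum_j x i * x j.
Proof. by rewrite expr2 mulr_suml; apply: eq_bigr => i _; rewrite mulr_sumr. Qed.

Lemma sqnorm_ge0 x : 0 <= sqnorm x.
Proof. by apply: sumr_ge0 => i _; rewrite sqr_ge0. Qed.

Lemma qformD_mx M N x :
  qform (fun i j => M i j + N i j) x = qform M x + qform N x.
Proof.
rewrite /qform -big_split; apply: eq_bigr => i _.
by rewrite -big_split; apply: eq_bigr => j _ /=; ring.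
Qed.

Lemma qform_sum_mx (I : Type) (s : seq I) (F : I -> T -> T -> R) x :
  qform (fun i j => \sum_(k <- s) F k i j) x = \sum_(k <- s) qform (F k) x.
Proof.
rewrite /qform [RHS]exchange_big; apply: eq_bigr => i _.
rewrite [RHS]exchange_big; apply: eq_bigr => j _.
by rewrite mulr_sumr mulr_suml.
Qed.

Lemma qformZ_mx c M x : qform (fun i j => c * M i j) x = c * qform M x.
Proof.
rewrite /qform mulr_sumr; apply: eq_bigr => i _.
by rewrite mulr_sumr; apply: eq_bigr => j _; ring.
Qed.

Lemma qform_scalar_mx c x : qform (fun i j => c * (i == j)%:R) x = c * sqnorm x.
Proof.
rewrite /qform /sqnorm mulr_sumr; apply: eq_bigr => i _.
transitivity (\sum_j c * x i * x j * (j == i)%:R).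
  by apply: eq_bigr => j _; rewrite (eq_sym i); ring.
by rewrite sum_mul_delta; ring.
Qed.

Lemma qform_const_mx c x : qform (fun _ _ => c) x = c * (\sum_i x i) ^+ 2.
Proof.
rewrite sqr_sum mulr_sumr; apply: eq_bigr => i _.
by rewrite mulr_sumr; apply: eq_bigr => j _; ring.
Qed.

Definition bilin G x y := \sum_i \sum_j x i * G i j * y j.

Lemma qform_lin G x y s t :
  qform G (fun k => s * x k + t * y k) =
  s ^+ 2 * qform G x + s * t * (bilin G x y + bilin G y x) + t ^+ 2 * qform G y.
Proof.
rewrite /qform /bilin -big_split !mulr_sumr -!big_split; apply: eq_bigr => i _ /=.
rewrite -big_split !mulr_sumr -!big_split; apply: eq_bigr => j _ /=; ring.
Qed.

Lemma qformZ G c x : qform G (fun k => c * x k) = c ^+ 2 * qform G x.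
Proof.
rewrite /qform mulr_sumr; apply: eq_bigr => i _.
by rewrite mulr_sumr; apply: eq_bigr => j _; ring.
Qed.

Lemma qform_delta2 G p q s t :
  qform G (fun k => s * (k == p)%:R + t * (k == q)%:R) =
  s ^+ 2 * G p p + s * t * (G p q + G q p) + t ^+ 2 * G q q.
Proof.
suff bilin_delta a b : bilin G (fun k => (k == a)%:R) (fun k => (k == b)%:R) = G a b.
  by rewrite qform_lin -!bilin_delta.
transitivity (\sum_i (\sum_j G i j * (j == b)%:R) * (i == a)%:R).
  by apply: eq_bigr => i _; rewrite mulr_suml; apply: eq_bigr => j _; ring.
by rewrite !sum_mul_delta.
Qed.

Lemma qform_eq_off G p x y :
  (forall j, G p j = 0) -> (forall i, G i p = 0) ->
  (forall k, k != p -> x k = y k) -> qform G x = qform G y.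
Proof.
move=> row0 col0 xy; rewrite /qform; apply: eq_bigr => i _; apply: eq_bigr => j _.
have [->|ip] := eqVneq i p; first by rewrite row0 !(mulr0, mul0r).
have [->|jp] := eqVneq j p; first by rewrite col0 !(mulr0, mul0r).
by rewrite !xy.
Qed.

End QuadraticForms.

Section Gram.
Variables (R : realType) (T : finType).
Implicit Types (G : T -> T -> R) (x : T -> R).

Definition sym_mx G := forall i j, G i j = G j i.

Definition psd G := forall x, 0 <= qform G x.

Lemma psd_diag_ge0 G p : psd G -> 0 <= G p p.
Proof.
move=> Gpsd; have := Gpsd (fun k => 1 * (k == p)%:R + 0 * (k == p)%:R).
by rewrite qform_delta2; lra.
Qed.

(* Along [t e_p + e_j] the form is affine in [t], with slope [2 G p j]. *)
Lemma psd_row0 G p : sym_mx G -> psd G -> G p p = 0 -> forall j, G p j = 0.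
Proof.
move=> Gsym Gpsd Gpp j; apply/eqP; apply: contraT => Gpj.
pose t := - (G j j + 1) / (2 * G p j).
have := Gpsd (fun k => t * (k == p)%:R + 1 * (k == j)%:R).
rewrite qform_delta2 Gpp (Gsym j p).
have -> : t * 1 * (G p j + G p j) = - (G j j + 1) by rewrite /t; field.
lra.
Qed.

Definition schur G p i j := G i j - G p i * G p j / G p p.

Lemma schur_sym G p : sym_mx G -> sym_mx (schur G p).
Proof. by move=> Gsym i j; rewrite /schur Gsym (mulrC (G p i)). Qed.

Lemma schur_row0 G p : sym_mx G -> G p p != 0 -> forall j, schur G p p j = 0.
Proof. by move=> Gsym Gpp j; rewrite /schur Gsym; field. Qed.

Lemma qform_schur G p x :
  qform (schur G p) x = qform G x - (\sum_k G p k * x k) ^+ 2 / G p p.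
Proof.
rewrite sqr_sum mulr_suml /qform -sumrB; apply: eq_bigr => i _.
by rewrite mulr_suml -sumrB; apply: eq_bigr => j _; rewrite /schur; ring.
Qed.

(* Moving [x] along the [p]-th axis to kill [\sum_k G p k * x k] leaves the Schur
   complement's form unchanged and turns it into that of [G]. *)
Lemma psd_schur G p : sym_mx G -> psd G -> G p p != 0 -> psd (schur G p).
Proof.
move=> Gsym Gpsd Gpp x.
pose x' k := x k - (\sum_k G p k * x k) / G p p * (k == p)%:R.
have row0 := schur_row0 Gsym Gpp.
have -> : qform (schur G p) x = qform (schur G p) x'.
  apply: (qform_eq_off row0) => [i|k kp]; first by rewrite (schur_sym p Gsym) row0.
  by rewrite /x' (negbTE kp) mulr0 subr0.
rewrite qform_schur.
have -> : \sum_k G p k * x' k = 0.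
  rewrite /x'; under eq_bigr do rewrite mulrBr mulrA.
  by rewrite sumrB sum_mul_delta; field.
by rewrite expr0n /= mul0r subr0.
Qed.

(* Symmetric Gaussian elimination: [G] is [schur G p] plus the rank-one matrix
   [(G p) (G p)^T / G p p], and [schur G p] vanishes on row [p]. *)
Lemma psd_gram G : sym_mx G -> psd G ->
  exists s : seq (T -> R), forall i j, G i j = \sum_(v <- s) v i * v j.
Proof.
suff gram_on (r : seq T) : forall G, (forall i j, i \notin r -> G i j = 0) ->
    sym_mx G -> psd G ->
    exists s : seq (T -> R), forall i j, G i j = \sum_(v <- s) v i * v j.
  by apply: (gram_on (enum T)) => i j; rewrite mem_enum.
elim: r => [|p r IH] {}G Gsupp Gsym Gpsd.
  by exists [::] => i j; rewrite big_nil Gsupp.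
have supp_r (H : T -> T -> R) : (forall j, H p j = 0) ->
    (forall i j, i \notin p :: r -> H i j = 0) -> forall i j, i \notin r -> H i j = 0.
  move=> Hp Hsupp i j iNr; have [->|ip] := eqVneq i p; first exact: Hp.
  by apply: Hsupp; rewrite inE negb_or ip.
have [Gpp0|Gpp] := eqVneq (G p p) 0.
  by apply: IH => //; apply: supp_r => //; exact: psd_row0.
have [s Hs] : exists s : seq (T -> R),
    forall i j, schur G p i j = \sum_(v <- s) v i * v j.
  apply: IH; [ | exact: schur_sym | exact: psd_schur].
  apply: supp_r; first exact: schur_row0.
  move=> i j iNr; rewrite /schur Gsupp // (Gsym p i) Gsupp //; ring.
pose d := Num.sqrt (G p p).
have d2 : d ^+ 2 = G p p by rewrite sqr_sqrtr // psd_diag_ge0.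
have d_neq0 : d != 0 by apply: contraNneq Gpp; rewrite -d2 => ->; rewrite expr0n.
by exists ((fun k => G p k / d) :: s) => i j; rewrite big_cons -Hs /schur -d2; field.
Qed.

End Gram.

Section Kronecker.
Variables (R : realType) (T1 T2 : finType).

Definition kron (G1 : T1 -> T1 -> R) (G2 : T2 -> T2 -> R) (p q : T1 * T2) : R :=
  G1 p.1 q.1 * G2 p.2 q.2.

Lemma sum_pair (F : T1 * T2 -> R) : \sum_p F p = \sum_i \sum_j F (i, j).
Proof. by rewrite pair_bigA; apply: eq_bigr => -[]. Qed.

Lemma qform_kron_rank1 (G1 : T1 -> T1 -> R) (v : T2 -> R) (w : T1 * T2 -> R) :
  qform (kron G1 (fun j j' => v j * v j')) w =
  qform G1 (fun i => \sum_j w (i, j) * v j).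
Proof.
rewrite /qform sum_pair; apply: eq_bigr => i _.
under eq_bigr do rewrite sum_pair.
rewrite exchange_big; apply: eq_bigr => i' _.
rewrite -mulrA mulr_suml; apply: eq_bigr => j _.
rewrite mulr_sumr mulr_sumr; apply: eq_bigr => j' _.
by rewrite /kron /=; ring.
Qed.

Lemma psd_kron (G1 : T1 -> T1 -> R) (G2 : T2 -> T2 -> R) :
  psd G1 -> sym_mx G2 -> psd G2 -> psd (kron G1 G2).
Proof.
move=> G1psd G2sym G2psd w; have [s G2_gram] := psd_gram G2sym G2psd.
have -> : kron G1 G2 = fun p q => \sum_(v <- s) kron G1 (fun j j' => v j * v j') p q.
  by apply/funext => p; apply/funext => q; rewrite /kron G2_gram mulr_sumr.
rewrite qform_sum_mx; apply: sumr_ge0 => v _.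
by rewrite qform_kron_rank1.
Qed.

End Kronecker.

Section SLemma.
Variables (R : realType) (T : finType).
Implicit Types (M A : T -> T -> R) (x y z : T -> R).
Local Open Scope classical_set_scope.

(* With [c < 0] the roots [u1 > 0 > u2] are real and [u1 * u2 = c]; the combination
   [- u2 * f u1 + u1 * f u2] of the values of [f u = p u^2 + q u + r] cancels [q]. *)
Lemma ge0_at_roots (b c p q r : R) : c < 0 ->
  (forall u, u ^+ 2 + b * u + c = 0 -> 0 <= p * u ^+ 2 + q * u + r) ->
  0 <= r - c * p.
Proof.
move=> c_lt0 f_ge0.
pose d := Num.sqrt (b ^+ 2 / 4 - c).
have d2 : d ^+ 2 = b ^+ 2 / 4 - c by rewrite sqr_sqrtr //; nra.
have d_ge0 : 0 <= d := sqrtr_ge0 _.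
pose u1 := - (b / 2) + d; pose u2 := - (b / 2) - d.
have u1_gt0 : 0 < u1 by rewrite /u1; nra.
have u2_lt0 : u2 < 0 by rewrite /u2; nra.
have f1 : 0 <= p * u1 ^+ 2 + q * u1 + r by apply: f_ge0; rewrite /u1; nra.
have f2 : 0 <= p * u2 ^+ 2 + q * u2 + r by apply: f_ge0; rewrite /u2; nra.
have c_prod : c = u1 * u2 by rewrite /u1 /u2; nra.
have : 0 <= (u1 - u2) * (r - c * p).
  have -> : (u1 - u2) * (r - c * p) =
      - u2 * (p * u1 ^+ 2 + q * u1 + r) + u1 * (p * u2 ^+ 2 + q * u2 + r).
    by rewrite c_prod; ring.
  by apply: addr_ge0; apply: mulr_ge0; lra.
by rewrite pmulr_rge0 // subr_gt0 (lt_trans u2_lt0).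
Qed.

Lemma s_lemma_pair M A x y : (forall z, qform A z = 0 -> 0 <= qform M z) ->
  0 < qform A x -> qform A y < 0 ->
  0 <= qform A x * qform M y - qform A y * qform M x.
Proof.
move=> Mnull Ax_gt0 Ay_lt0.
set a := qform A x in Ax_gt0 *; set g := qform A y in Ay_lt0 *.
pose z u := fun k => u * x k + a * y k.
have : 0 <= a ^+ 2 * qform M y - a * g * qform M x.
  apply: (@ge0_at_roots (bilin A x y + bilin A y x) _ _ (a * (bilin M x y + bilin M y x)))
    => [|u root]; first by nra.
  have -> : qform M x * u ^+ 2 + a * (bilin M x y + bilin M y x) * u + a ^+ 2 * qform M y =
      qform M (z u) by rewrite qform_lin; ring.
  apply: Mnull; rewrite qform_lin -/a -/g.
  by rewrite -[RHS](mulr0 a) -root; ring.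
have -> : a ^+ 2 * qform M y - a * g * qform M x =
    a * (a * qform M y - g * qform M x) by ring.
by rewrite pmulr_rge0.
Qed.

Lemma s_lemma M A : (forall z, qform A z = 0 -> 0 <= qform M z) ->
  (exists x, 0 < qform A x) -> (exists y, qform A y < 0) ->
  exists l, forall z, 0 <= qform M z + l * qform A z.
Proof.
move=> Mnull [x0 Ax0] [y0 Ay0].
pose L := [set - qform M x / qform A x | x in [set x | 0 < qform A x]].
have L_ub y : qform A y < 0 -> ubound L (qform M y / (- qform A y)).
  move=> Ay _ [x /= Ax <-].
  have Ay' : 0 < - qform A y by rewrite oppr_gt0.
  rewrite ler_pdivrMr // mulrAC ler_pdivlMr //.
  by have := s_lemma_pair Mnull Ax Ay; lra.
have L_has_ub : has_ubound L by exists (qform M y0 / (- qform A y0)); exact: L_ub.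
have L_neq0 : L !=set0 by exists (- qform M x0 / qform A x0); exists x0.
exists (sup L) => z.
case: (ltgtP (qform A z) 0) => Az.
- have Az' : 0 < - qform A z by rewrite oppr_gt0.
  by have := ge_sup L_neq0 (L_ub z Az); rewrite ler_pdivlMr //; lra.
- by have := ub_le_sup L_has_ub (ex_intro2 _ _ z Az erefl); rewrite ler_pdivrMr //; lra.
- by rewrite Az mulr0 addr0; apply: Mnull.
Qed.

End SLemma.

Section Certificate.
Variables (R : realType) (T : finType).
Implicit Types (A : T -> T -> R) (x v : T -> R).
Local Open Scope classical_set_scope.

Definition isotropic_sqnorms A :=
  [set sqnorm v | v in [set v : T -> R | in_S v /\ qform A v = 0]].

Lemma isotropic_sqnorms0 A : isotropic_sqnorms A 0.
Proof.
have sqnorm0 : sqnorm (fun _ : T => 0 : R) = 0.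
  by rewrite /sqnorm big1 // => i _; rewrite expr0n.
exists (fun _ => 0) => //; split; first by rewrite /in_S sqnorm0 big1.
by rewrite /qform big1 // => i _; rewrite big1 // => j _; rewrite !mul0r.
Qed.

Lemma in_S_sqnorm_le v : in_S v -> sqnorm v <= #|T|%:R.
Proof.
rewrite /in_S => Sv.
have : 2 * \sum_i v i <= sqnorm v + #|T|%:R.
  rewrite /sqnorm -sum1_card natr_sum mulr_sumr -big_split /=.
  by apply: ler_sum => i _; have := sqr_ge0 (v i - 1); rewrite sqrrB; lra.
by rewrite Sv; lra.
Qed.

Lemma isotropic_sqnorms_ub A : has_ubound (isotropic_sqnorms A).
Proof. by exists #|T|%:R => _ [v [Sv _] <-]; exact: in_S_sqnorm_le. Qed.

Lemma sup_val_ge0 A : 0 <= sup_val A.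
Proof. exact: (ub_le_sup (isotropic_sqnorms_ub A) (isotropic_sqnorms0 A)). Qed.

Lemma sup_val_le A c :
  (forall v, in_S v -> qform A v = 0 -> sqnorm v <= c) -> sup_val A <= c.
Proof.
move=> le_c; apply: ge_sup; first by exists 0; exact: isotropic_sqnorms0.
by move=> _ [v [Sv Av] <-]; exact: le_c.
Qed.

(* Rescaling [x] onto the sphere [S] gives the isotropic vector
   [(\sum_i x i / sqnorm x) *: x] of squared norm [(\sum_i x i) ^+ 2 / sqnorm x]. *)
Lemma sqr_sum_le_sup_val A x :
  qform A x = 0 -> (\sum_i x i) ^+ 2 <= sup_val A * sqnorm x.
Proof.
move=> Ax; have [x0|x_neq0] := eqVneq (sqnorm x) 0.
  have {}x0 i : x i = 0.
    apply/eqP; rewrite -sqrf_eq0; apply/eqP; move/psumr_eq0P: x0; apply=> // j _.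
    exact: sqr_ge0.
  by rewrite big1 // expr0n mulr_ge0 ?sup_val_ge0 ?sqnorm_ge0.
have x_gt0 : 0 < sqnorm x by rewrite lt_def x_neq0 sqnorm_ge0.
pose c := (\sum_i x i) / sqnorm x.
have sqnorm_cx : sqnorm (fun k => c * x k) = c ^+ 2 * sqnorm x.
  by rewrite /sqnorm mulr_sumr; apply: eq_bigr => i _; ring.
rewrite -ler_pdivrMr //; apply: (ub_le_sup (isotropic_sqnorms_ub A)).
exists (fun k => c * x k); last by rewrite sqnorm_cx /c; field.
split; last by rewrite qformZ Ax mulr0.
by rewrite /in_S sqnorm_cx -mulr_sumr /c; field.
Qed.

Definition cert_mx A (a l : R) i j := a * (i == j)%:R - 1 + l * A i j.

Lemma qform_cert_mx A a l x :
  qform (cert_mx A a l) x = a * sqnorm x - (\sum_i x i) ^+ 2 + l * qform A x.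
Proof. by rewrite !qformD_mx qform_scalar_mx qform_const_mx qformZ_mx; ring. Qed.

Lemma weighted_adj_cert (e : rel T) A :
  weighted_adj e A -> exists l, psd (cert_mx A (sup_val A) l).
Proof.
move=> [Asym Adiag _].
have cert0 z : qform A z = 0 -> 0 <= qform (cert_mx A (sup_val A) 0) z.
  by move=> Az; rewrite qform_cert_mx mul0r addr0 subr_ge0 sqr_sum_le_sup_val.
have [[p [q Apq]]|A0] := pselect (exists p q, A p q != 0); last first.
  exists 0 => z; apply: cert0; rewrite /qform big1 // => i _; rewrite big1 // => j _.
  have -> : A i j = 0 by apply/eqP/negPn/negP => Aij; apply: A0; exists i, j.
  by rewrite mulr0 mul0r.
have Aline t : qform A (fun k => 1 * (k == p)%:R + t * (k == q)%:R) = 2 * t * A p q.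
  by rewrite qform_delta2 !Adiag (Asym q p); ring.
have Apq2 : 0 < A p q ^+ 2 by rewrite lt_def sqr_ge0 sqrf_eq0 Apq.
have [l Hl] : exists l, forall z, 0 <= qform (cert_mx A (sup_val A) 0) z + l * qform A z.
  apply: s_lemma cert0 _ _.
  - by exists (fun k => 1 * (k == p)%:R + A p q * (k == q)%:R); rewrite Aline; nra.
  - by exists (fun k => 1 * (k == p)%:R + (- A p q) * (k == q)%:R); rewrite Aline; nra.
by exists l => z; have := Hl z; rewrite !qform_cert_mx; lra.
Qed.

Lemma sup_vals_neq0 (e : rel T) :
  [set sup_val A | A in [set A : T -> T -> R | weighted_adj e A]] !=set0.
Proof. by exists (sup_val (fun _ _ : T => 0)), (fun _ _ => 0). Qed.

Lemma sup_vals_ge0 (e : rel T) :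
  lbound [set sup_val A | A in [set A : T -> T -> R | weighted_adj e A]] 0.
Proof. by move=> _ [A _ <-]; exact: sup_val_ge0. Qed.

Lemma alphaS_le_sup_val (e : rel T) A : weighted_adj e A -> alphaS R e <= sup_val A.
Proof.
by move=> eA; apply: ge_inf; [exists 0; exact: sup_vals_ge0 | exists A].
Qed.

End Certificate.

Section StrongProduct.
Variables (R : realType) (T1 T2 : finType) (e1 : rel T1) (e2 : rel T2).
Variables (A1 : T1 -> T1 -> R) (A2 : T2 -> T2 -> R) (a b l1 l2 : R).

Definition prod_mx (p q : T1 * T2) : R :=
  (a * (p.1 == q.1)%:R + l1 * A1 p.1 q.1) * (b * (p.2 == q.2)%:R + l2 * A2 p.2 q.2)
  - a * b * (p == q)%:R.

Lemma weighted_adj_prod_mx : weighted_adj e1 A1 -> weighted_adj e2 A2 ->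
  weighted_adj (strong_prod e1 e2) prod_mx.
Proof.
move=> [A1sym A1diag A1adj] [A2sym A2diag A2adj]; split.
- move=> [i j] [i' j']; rewrite /prod_mx /= !xpair_eqE A1sym A2sym.
  by rewrite (eq_sym i) (eq_sym j) (eq_sym i').
- by move=> [i j]; rewrite /prod_mx /= !eqxx A1diag A2diag /=; ring.
move=> [i j] [i' j']; rewrite /prod_mx /strong_prod /= xpair_eqE.
have [<- /= jj' nadj|ii' _ /= nadj] := eqVneq i i'.
  have ne2 : ~~ e2 j j' by apply: contra nadj => ->; rewrite !orbT.
  by rewrite A1diag A2adj // (negbTE jj'); ring.
have [ee1|ne1] := boolP (e1 i i'); last by rewrite A1adj //=; ring.
have [jj'|jj'] := eqVneq j j'; first by rewrite ee1 jj' eqxx /= orbT in nadj.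
by rewrite A2adj //=; [ring | apply: contra nadj => ->; rewrite ee1].
Qed.

Lemma sqr_sum_le_prod_mx :
  psd (cert_mx A1 a l1) -> sym_mx A2 -> psd (cert_mx A2 b l2) ->
  forall w, (\sum_p w p) ^+ 2 <= a * b * sqnorm w + qform prod_mx w.
Proof.
move=> G1psd A2sym G2psd w.
pose J1 (_ _ : T1) : R := 1; pose J2 (_ _ : T2) : R := 1.
have J2sym : sym_mx J2 by [].
have J1psd : psd J1 by move=> x; rewrite qform_const_mx mul1r sqr_ge0.
have J2psd : psd J2 by move=> x; rewrite qform_const_mx mul1r sqr_ge0.
have G2sym : sym_mx (cert_mx A2 b l2) by move=> j j'; rewrite /cert_mx A2sym eq_sym.
have -> : prod_mx = fun p q =>
    kron (cert_mx A1 a l1) (cert_mx A2 b l2) p q + kron (cert_mx A1 a l1) J2 p q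
    + kron J1 (cert_mx A2 b l2) p q + 1 + (- (a * b)) * (p == q)%:R.
  apply/funext => -[i j]; apply/funext => -[i' j'].
  rewrite /prod_mx /kron /cert_mx /J1 /J2 /= xpair_eqE.
  by case: (i == i'); case: (j == j'); rewrite /=; ring.
rewrite !qformD_mx qform_const_mx qform_scalar_mx mul1r.
have := psd_kron G1psd G2sym G2psd w.
have := psd_kron G1psd J2sym J2psd w.
have := psd_kron J1psd G2sym G2psd w.
lra.
Qed.

End StrongProduct.

Lemma alphaS_strong_prod_le (R : realType) (T1 T2 : finType) (e1 : rel T1) (e2 : rel T2)
    (A1 : T1 -> T1 -> R) (A2 : T2 -> T2 -> R) :
  weighted_adj e1 A1 -> weighted_adj e2 A2 ->
  alphaS R (strong_prod e1 e2) <= sup_val A1 * sup_val A2.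
Proof.
move=> e1A1 e2A2; have A2sym : sym_mx A2 by case: e2A2.
have [l1 G1psd] := weighted_adj_cert e1A1; have [l2 G2psd] := weighted_adj_cert e2A2.
have e12C := weighted_adj_prod_mx (sup_val A1) (sup_val A2) l1 l2 e1A1 e2A2.
apply: le_trans (alphaS_le_sup_val e12C) _.
apply: sup_val_le => v Sv Cv.
have := sqr_sum_le_prod_mx G1psd A2sym G2psd v; rewrite Cv addr0 Sv.
have := sqnorm_ge0 v; have := mulr_ge0 (sup_val_ge0 A1) (sup_val_ge0 A2).
by nra.
Qed.

Section InfProduct.
Variable R : realType.
Local Open Scope classical_set_scope.

Lemma le_mul_inf (E : set R) (x a : R) : E !=set0 -> 0 <= a ->
  (forall b, E b -> x <= a * b) -> x <= a * inf E.
Proof.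
move=> [b0 Eb0] a_ge0 le_ab; have [a0|a_neq0] := eqVneq a 0.
  by have := le_ab b0 Eb0; rewrite a0 !mul0r.
have a_gt0 : 0 < a by rewrite lt_def a_neq0 a_ge0.
rewrite -ler_pdivrMl //; apply: lb_le_inf; first by exists b0.
by move=> b Eb; rewrite ler_pdivrMl //; exact: le_ab.
Qed.

Lemma le_inf_mul (E1 E2 : set R) (x : R) : E1 !=set0 -> E2 !=set0 ->
  lbound E1 0 -> lbound E2 0 ->
  (forall a b, E1 a -> E2 b -> x <= a * b) -> x <= inf E1 * inf E2.
Proof.
move=> E1_neq0 E2_neq0 E1_ge0 E2_ge0 le_ab.
rewrite mulrC; apply: le_mul_inf => // [|a E1a]; first exact: lb_le_inf.
by rewrite mulrC; apply: le_mul_inf => // [|b E2b]; [exact: E1_ge0 | exact: le_ab].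
Qed.

End InfProduct.

Unset Implicit Arguments.

Theorem lemma3 (R : realType) (T1 T2 : finType) (e1 : rel T1) (e2 : rel T2) :
  simple_graph e1 -> simple_graph e2 ->
  alphaS R (strong_prod e1 e2) <= alphaS R e1 * alphaS R e2.
Proof.
(* The construction works for arbitrary relations [e1], [e2]. *)
move=> _ _.
apply: le_inf_mul; [exact: sup_vals_neq0 | exact: sup_vals_neq0 |
                    exact: sup_vals_ge0 | exact: sup_vals_ge0 | ].
by move=> _ _ [A1 e1A1 <-] [A2 e2A2 <-]; exact: alphaS_strong_prod_le.
Qed.
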